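(* Let $A[1..n]$, $n\ge2$, be a uniformly random permutation of $n$ distinct keys, and apply Yaroslavskiy's partitioning procedure (described in the context) to $A[1..n]$, returning $(i_p,i_q)$. Then, conditional on $(i_p,i_q)$, the three subarrays $A[1..i_p-1]$, $A[i_p+1..i_q-1]$ and $A[i_q+1..n]$ after partitioning are, in terms of relative order of their entries, independent uniformly random permutations of their respective sizes.
   Context: Yaroslavskiy's partitioning of $A[\ell_0..r_0]$: compare $A[\ell_0]>A[r_0]$; let $p$ be the smaller and $q$ the larger of these two keys. Set $\ell\gets\ell_0+1$, $g\gets r_0-1$, $k\gets\ell$. While $k\le g$: if $A[k]<p$, swap $A[k],A[\ell]$ and $\ell\gets\ell+1$; else, if $A[k]\ge q$: while ($A[g]>q$ and $k<g$) do $g\gets g-1$; then if $A[g]\ge p$ swap $A[k],A[g]$, else swap $A[k],A[g]$, swap $A[k],A[\ell]$ and $\ell\gets\ell+1$; then $g\gets g-1$. After these cases, $k\gets k+1$. After the loop: $\ell\gets\ell-1$, $g\gets g+1$, $A[\ell_0]\gets A[\ell]$, $A[\ell]\gets p$, $A[r_0]\gets A[g]$, $A[g]\gets q$; return $(\ell,g)$. After partitioning, entries of $A[\ell_0..\ell-1]$ are $<p$, entries of $A[\ell+1..g-1]$ lie strictly between $p$ and $q$, entries of $A[g+1..r_0]$ are $>q$. *)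

From mathcomp Require Import all_boot all_fingroup.
Set Implicit Arguments. Unset Strict Implicit. Unset Printing Implicit Defensive.

(* Arrays are functions nat -> nat, indexed 1..n as in the paper. *)
Definition arr := nat -> nat.

Definition upd (A : arr) (i v : nat) : arr := fun j => if j == i then v else A j.
Definition swap (A : arr) (i j : nat) : arr := upd (upd A i (A j)) j (A i).

Fixpoint dec_g (fuel : nat) (A : arr) (q k g : nat) : nat :=
  match fuel with
  | 0 => g
  | f.+1 => if (q < A g) && (k < g) then dec_g f A q k g.-1 else g
  end.

Fixpoint yloop (fuel : nat) (A : arr) (p q l g k : nat) : arr * nat * nat :=
  match fuel with
  | 0 => (A, l, g)
  | f.+1 =>
    if k <= g then
      if A k < p then yloop f (swap A k l) p q l.+1 g k.+1
      else if q <= A k then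
        let g' := dec_g fuel A q k g in
        if p <= A g' then yloop f (swap A k g') p q l g'.-1 k.+1
        else yloop f (swap (swap A k g') k l) p q l.+1 g'.-1 k.+1
      else yloop f A p q l g k.+1
    else (A, l, g)
  end.

Definition yaroslavskiy (A : arr) (l0 r0 : nat) : arr * nat * nat :=
  let p := minn (A l0) (A r0) in
  let q := maxn (A l0) (A r0) in
  let '(A1, l1, g1) := yloop (r0 - l0).+1 A p q l0.+1 r0.-1 l0.+1 in
  let l := l1.-1 in
  let g := g1.+1 in
  let A2 := upd A1 l0 (A1 l) in
  let A3 := upd A2 l p in
  let A4 := upd A3 r0 (A3 g) in
  let A5 := upd A4 g q in
  (A5, l, g).

(* The input array A[1..n] holding the distinct keys pi(0), ..., pi(n-1). *)
Definition arr_of_perm (n : nat) (pi : {perm 'I_n}) : arr :=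
  fun i => nth 0 [seq val (pi j) | j <- enum 'I_n] i.-1.

Definition subarr (A : arr) (a m : nat) : seq nat := [seq A k | k <- iota a m].

(* relative order (standardization): each entry replaced by its rank *)
Definition relorder (s : seq nat) : seq nat := [seq count (fun y => y < x) s | x <- s].

Definition ypart (n : nat) (pi : {perm 'I_n}) : nat * nat :=
  let '(_, ip, iq) := yaroslavskiy (arr_of_perm pi) 1 n in (ip, iq).

Definition ypatterns (n : nat) (pi : {perm 'I_n}) : seq nat * seq nat * seq nat :=
  let '(A, ip, iq) := yaroslavskiy (arr_of_perm pi) 1 n in
  (relorder (subarr A 1 (ip - 1)),
   relorder (subarr A ip.+1 (iq - ip - 1)),
   relorder (subarr A iq.+1 (n - iq))).

From mathcomp Require Import all_boot all_fingroup.
From mathcomp Require Import zify.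
Set Implicit Arguments. Unset Strict Implicit. Unset Printing Implicit Defensive.

(* Fix the pivot positions (ip, iq) = (a+1, a+b+2) with n = a+b+c+2.  The proof
   is an orbit-counting argument.
   1. Correctness: partitioning a permutation array A[1..n] yields a partitioned
      array whose pivots sit at their ranks, so the three segments hold exactly
      the keys below, between and above the pivots.  Hence composing the input with h
      keeps (ip, iq) and acts by h on the triple of relative orders.
   3. Counting: S_a x S_b x S_c acts simply transitively on triples of
      permutations of sizes a, b, c, so (h, pi) |-> pi * h is a bijection between
      S_a x S_b x S_c times the inputs with a prescribed triple of patterns and
      all inputs with output (ip, iq); this gives the claimed identity. *)

Lemma updE (A : arr) i v x : upd A i v x = if x == i then v else A x.
Proof. by []. Qed.

Lemma swapE (A : arr) i j x :
  swap A i j x = if x == j then A i else if x == i then A j else A x.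
Proof. by []. Qed.

Definition arr_inj n (A : arr) :=
  forall i j, 1 <= i <= n -> 1 <= j <= n -> A i = A j -> i = j.

Definition arr_bound n (A : arr) := forall j, 1 <= j <= n -> A j < n.

Lemma subarr_uniq n (Y : arr) a len : arr_inj n Y -> 1 <= a -> a + len <= n.+1 ->
  uniq (subarr Y a len).
Proof.
move=> inj a1 al; rewrite map_inj_in_uniq ?iota_uniq // => i j.
by rewrite !mem_iota => hi hj /inj; apply; lia.
Qed.

Lemma arr_surj n (Y : arr) : arr_inj n Y -> arr_bound n Y ->
  forall x, x < n -> exists2 j, 1 <= j <= n & Y j = x.
Proof.
move=> inj bnd.
have U : uniq (subarr Y 1 n) by apply: subarr_uniq inj _ _; lia.
have [_ E] := uniq_min_size U (s2 := iota 0 n)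
  ltac:(move=> x /mapP [j]; rewrite !mem_iota => hj ->; apply: bnd; lia)
  ltac:(by rewrite size_map !size_iota).
move=> x xn; have : x \in subarr Y 1 n by rewrite E mem_iota.
by case/mapP => j; rewrite mem_iota => hj ->; exists j => //; lia.
Qed.

Lemma subarr_values n (Y : arr) a len m0 m : arr_inj n Y -> arr_bound n Y ->
  1 <= a -> a + len <= n.+1 -> m0 + m <= n ->
  (forall j, 1 <= j <= n -> (a <= j < a + len) = (m0 <= Y j < m0 + m)) ->
  perm_eq (subarr Y a len) (iota m0 m).
Proof.
move=> inj bnd a1 al mn blk; apply: uniq_perm; rewrite ?iota_uniq //.
  exact: subarr_uniq inj a1 al.
move=> x; rewrite mem_iota; apply/mapP/idP.
  by case=> j; rewrite mem_iota => hj ->; rewrite -blk //; lia.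
move=> hx; have [|j hj Yj] := arr_surj inj bnd (x := x); first lia.
by exists j; rewrite // mem_iota blk // Yj.
Qed.

Definition partitioned n (Y : arr) l g := forall j, 1 <= j <= n ->
  [/\ j < l -> Y j < Y l, l < j < g -> Y l < Y j < Y g & g < j -> Y g < Y j].

Lemma partitioned_blocks n (Y : arr) l g : arr_inj n Y -> arr_bound n Y ->
  1 <= l < g -> g <= n -> Y l < Y g -> partitioned n Y l g ->
  [/\ Y l = l.-1, Y g = g.-1, perm_eq (subarr Y 1 (l - 1)) (iota 0 (l - 1)),
      perm_eq (subarr Y l.+1 (g - l - 1)) (iota l (g - l - 1)) &
      perm_eq (subarr Y g.+1 (n - g)) (iota g (n - g))].
Proof.
move=> inj bnd lg gn pq part.
have ql : Y g < n by apply: bnd; lia.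
have cls j : 1 <= j <= n ->
    [\/ j < l /\ Y j < Y l, j = l \/ j = g, l < j < g /\ Y l < Y j < Y g
      | g < j /\ Y g < Y j].
  move=> hj; have [c1 c2 c3] := part j hj.
  case: (ltngtP j l) => [jl|lj|->]; last by constructor 2; left.
    by constructor 1; split; [|apply: c1].
  case: (ltngtP j g) => [jg|gj|->]; last by constructor 2; right.
    by constructor 3; split; [|apply: c2]; lia.
  by constructor 4; split; [|apply: c3].
have B1 : perm_eq (subarr Y 1 (l - 1)) (iota 0 (Y l)).
  apply: (subarr_values (n := n)) => //; try lia.
  by move=> j hj; case/cls: (hj) => [[? ?]|[->|->]|[? ?]|[? ?]]; lia.
have B2 : perm_eq (subarr Y l.+1 (g - l - 1)) (iota (Y l).+1 (Y g - Y l - 1)).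
  apply: (subarr_values (n := n)) => //; try lia.
  by move=> j hj; case/cls: (hj) => [[? ?]|[->|->]|[? ?]|[? ?]]; lia.
have B3 : perm_eq (subarr Y g.+1 (n - g)) (iota (Y g).+1 (n - (Y g).+1)).
  apply: (subarr_values (n := n)) => //; try lia.
  move=> j hj; have := bnd j hj.
  by case/cls: (hj) => [[? ?]|[->|->]|[? ?]|[? ?]] ?; lia.
have := perm_size B1; have := perm_size B2; have := perm_size B3.
rewrite !size_map !size_iota => s3 s2 s1.
have El : Y l = l.-1 by lia.
have Eg : Y g = g.-1 by lia.
move: B1 B2 B3; rewrite El Eg.
have -> : l.-1 = l - 1 by lia.
have -> : (l - 1).+1 = l by lia.
have -> : (g.-1).+1 = g by lia.
by have -> : g.-1 - (l - 1) - 1 = g - l - 1 by lia.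
Qed.

Lemma dec_g_range f (A : arr) q k g : k <= g -> k <= dec_g f A q k g <= g.
Proof.
elim: f g => [|f IH] g /= kg; first lia.
case: ifP => [/andP[_ kg']|]; last lia.
have := IH g.-1 ltac:(lia); lia.
Qed.

Lemma dec_g_spec f (A : arr) q k g : k <= g -> g <= k + f ->
  (forall j, dec_g f A q k g < j <= g -> q < A j) /\
  (dec_g f A q k g = k \/ A (dec_g f A q k g) <= q).
Proof.
elim: f g => [|f IH] g /= kg gf.
  by split; [move=> j; lia | left; lia].
case: ifP => [/andP[qA kg'] | stop].
  have [large stopped] := IH g.-1 ltac:(lia) ltac:(lia).
  split => // j hj; have [->|ne] := eqVneq j g => //.
  by apply: large; lia.
split; first by move=> j; lia.
case: (ltnP k g) => kg2; last by left; lia.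
by right; move: stop; rewrite kg2 andbT => /negbT; rewrite -leqNgt.
Qed.

Lemma swap_inj n A i j : 1 <= i <= n -> 1 <= j <= n -> arr_inj n A -> arr_inj n (swap A i j).
Proof.
move=> hi hj hA x y hx hy; rewrite !swapE.
case: eqP => ex; case: eqP => ey; try (move=> /hA; lia);
  (case: eqP => ex'; try (move=> /hA; lia));
  (case: eqP => ey'; move=> /hA; lia).
Qed.

Lemma swap_bound n A i j : 1 <= i <= n -> 1 <= j <= n -> arr_bound n A -> arr_bound n (swap A i j).
Proof.
move=> hi hj hA x hx; rewrite !swapE.
by case: eqP => _; [apply: hA | case: eqP => _; apply: hA].
Qed.

Record loop_inv (n : nat) (A0 A : arr) (p q l g k f : nat) : Prop := LoopInv {
  inv_l : 2 <= l; inv_lk : l <= k; inv_lg : l <= g.+1; inv_g : g <= n.-1;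
  inv_fuel : g.+2 <= k + f;
  inv_first : A 1 = A0 1; inv_last : A n = A0 n;
  inv_inj : arr_inj n A; inv_bound : arr_bound n A;
  inv_small : forall j, 2 <= j < l -> A j < p;
  inv_medium : forall j, l <= j -> j < k -> j <= g -> p <= A j <= q;
  inv_large : forall j, g < j <= n.-1 -> q <= A j }.

Record loop_post (n : nat) (A0 A : arr) (p q l g : nat) : Prop := LoopPost {
  post_l : 2 <= l; post_lg : l <= g.+1; post_g : g <= n.-1;
  post_first : A 1 = A0 1; post_last : A n = A0 n;
  post_inj : arr_inj n A; post_bound : arr_bound n A;
  post_small : forall j, 2 <= j < l -> A j < p;
  post_medium : forall j, l <= j <= g -> p <= A j <= q;
  post_large : forall j, g < j <= n.-1 -> q <= A j }.

Lemma loop_exit n A0 A p q l g k f :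
  loop_inv n A0 A p q l g k f -> g < k -> loop_post n A0 A p q l g.
Proof.
case=> *; split => // j /andP[? ?].
match goal with H : forall j, _ -> _ -> _ -> _ |- _ => apply: H end; lia.
Qed.

Ltac swap_cases := rewrite ?swapE; repeat (case: eqP => ?); try lia.
Ltac use_loop_inv := match goal with
 | |- _ => lia
 | H : forall j : nat, _ |- _ => apply: H; lia
 | H : forall j : nat, _ |- _ => apply: ltnW; apply: H; lia
 | H : _ \/ _ |- _ => case: H => ?; lia
 end.

Lemma loop_step_small n A0 A p q l g k f : loop_inv n A0 A p q l g k f.+1 ->
  k <= g -> A k < p -> loop_inv n A0 (swap A k l) p q l.+1 g k.+1 f.
Proof.
case=> il ilk ilg ig iff i1 in_ iinj ibnd iS iM iL kg Akp; split; try lia.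
- by swap_cases.
- by swap_cases.
- by apply: swap_inj => //; lia.
- by apply: swap_bound => //; lia.
- by move=> j hj; swap_cases; apply: iS; lia.
- by move=> j h1 h2 h3; swap_cases; apply: iM; lia.
- by move=> j hj; swap_cases; apply: iL; lia.
Qed.

Lemma loop_step_medium n A0 A p q l g k f : loop_inv n A0 A p q l g k f.+1 ->
  k <= g -> p <= A k < q -> loop_inv n A0 A p q l g k.+1 f.
Proof.
case=> il ilk ilg ig iff i1 in_ iinj ibnd iS iM iL kg Ak; split => //; try lia.
move=> j h1 h2 h3; case: (ltnP j k) => jk; first by apply: iM.
have -> : j = k by lia.
by move/andP: Ak => [? ?]; apply/andP; split => //; apply: ltnW.
Qed.

Lemma loop_step_large n A0 A p q l g k f g' : p <= q -> loop_inv n A0 A p q l g k f.+1 ->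
  k <= g -> q <= A k -> k <= g' <= g -> (forall j, g' < j <= g -> q < A j) ->
  g' = k \/ A g' <= q -> p <= A g' -> loop_inv n A0 (swap A k g') p q l g'.-1 k.+1 f.
Proof.
move=> pq [il ilk ilg ig iff i1 in_ iinj ibnd iS iM iL] kg qAk /andP[d1 d2] d3 d4 pAg.
split; try lia.
- by swap_cases.
- by swap_cases.
- by apply: swap_inj => //; lia.
- by apply: swap_bound => //; lia.
- by move=> j hj; swap_cases; use_loop_inv.
- by move=> j h1 h2 h3; swap_cases; use_loop_inv.
- by move=> j hj; swap_cases; case: (leqP j g) => ?; use_loop_inv.
Qed.

Lemma loop_step_large_small n A0 A p q l g k f g' : p <= q -> loop_inv n A0 A p q l g k f.+1 ->
  k <= g -> q <= A k -> k <= g' <= g -> (forall j, g' < j <= g -> q < A j) ->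
  g' = k \/ A g' <= q -> A g' < p ->
  loop_inv n A0 (swap (swap A k g') k l) p q l.+1 g'.-1 k.+1 f.
Proof.
move=> pq [il ilk ilg ig iff i1 in_ iinj ibnd iS iM iL] kg qAk /andP[d1 d2] d3 d4 pAg.
have kg' : k < g'.
  case: (ltnP k g') => // h; have eg : g' = k by lia.
  by move: pAg; rewrite eg; lia.
split; try lia.
- by swap_cases.
- by swap_cases.
- by apply: swap_inj; [lia|lia|apply: swap_inj; [lia|lia|done]].
- by apply: swap_bound; [lia|lia|apply: swap_bound; [lia|lia|done]].
- by move=> j hj; swap_cases; use_loop_inv.
- by move=> j h1 h2 h3; swap_cases; use_loop_inv.
- by move=> j hj; swap_cases; case: (leqP j g) => ?; use_loop_inv.
Qed.

Lemma yloop_post n A0 p q : p <= q -> forall f A l g k,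
  loop_inv n A0 A p q l g k f ->
  let: (A1, l1, g1) := yloop f A p q l g k in loop_post n A0 A1 p q l1 g1.
Proof.
move=> pq; elim=> [|f IH] A l g k I /=.
  by apply: (loop_exit I); have := inv_fuel I; lia.
case: (leqP k g) => kg; last by apply: (loop_exit I).
case: ifP => [Akp|/negbT Akp]; first exact/IH/loop_step_small.
case: ifP => [qAk|/negbT qAk]; last by apply/IH/loop_step_medium => //; lia.
have range := dec_g_range f.+1 A q kg.
have fuel : g <= k + f.+1 by have := inv_fuel I; lia.
have [large stop] := @dec_g_spec f.+1 A q k g kg fuel.
set g' := dec_g f.+1 A q k g in range large stop.
have -> : (if (q < A g) && (k < g) then dec_g f A q k g.-1 else g) = g' by [].
case: ifP => [pAg|/negbT pAg]; first exact/IH/(loop_step_large pq I).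
by apply/IH/(loop_step_large_small pq I) => //; lia.
Qed.

Definition place_pivots (A1 : arr) (l g n p q : nat) : arr :=
  let A2 := upd A1 1 (A1 l) in let A3 := upd A2 l p in
  let A4 := upd A3 n (A3 g) in upd A4 g q.

Lemma yaroslavskiyE A n : yaroslavskiy A 1 n =
  let: (A1, l1, g1) := yloop (n - 1).+1 A (minn (A 1) (A n)) (maxn (A 1) (A n)) 2 n.-1 2 in
  (place_pivots A1 l1.-1 g1.+1 n (minn (A 1) (A n)) (maxn (A 1) (A n)), l1.-1, g1.+1).
Proof. by rewrite /yaroslavskiy; case: yloop => [[]]. Qed.

Lemma place_pivotsE n (A1 : arr) l g p q j : 1 <= l < g -> g <= n -> 1 <= j <= n ->
  let rho := if j == 1 then l else if j == n then g else j in
  place_pivots A1 l g n p q j =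
    if j == l then p else if j == g then q else A1 rho.
Proof. by move=> hlg gn hj /=; rewrite /place_pivots !updE; repeat (case: eqP => ?); lia. Qed.

Lemma place_pivots_inside n (A1 : arr) p q l1 g1 j : 2 <= l1 <= g1.+1 -> g1 <= n.-1 ->
  1 <= j <= n -> j != l1.-1 -> j != g1.+1 ->
  exists2 r, 2 <= r <= n.-1 & [/\ place_pivots A1 l1.-1 g1.+1 n p q j = A1 r,
    r = (if j == 1 then l1.-1 else if j == n then g1.+1 else j),
    j < l1.-1 -> r < l1, l1.-1 < j < g1.+1 -> l1 <= r <= g1 & g1.+1 < j -> g1 < r].
Proof.
move=> hl hg hj /negbTE jl /negbTE jg; rewrite place_pivotsE ?jl ?jg //; try lia.
by eexists; last split; [|reflexivity|reflexivity|..]; repeat (case: eqP => ?); lia.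
Qed.

(* The final moves keep the array a permutation array, because the pivots do
   not occur in the scanned range [2, n-1]. *)
Lemma place_pivots_inj n (A1 : arr) p q l1 g1 : 2 <= l1 <= g1.+1 -> g1 <= n.-1 ->
  arr_inj n A1 -> p != q -> (forall r, 2 <= r <= n.-1 -> A1 r <> p /\ A1 r <> q) ->
  arr_inj n (place_pivots A1 l1.-1 g1.+1 n p q).
Proof.
move=> hl hg inj1 pq inner; set Y := place_pivots _ _ _ _ _ _.
have Yl : Y l1.-1 = p by rewrite /Y place_pivotsE ?eqxx //; lia.
have Yg : Y g1.+1 = q by rewrite /Y place_pivotsE ?eqxx ?ifN_eq //; lia.
have at_pivot j : 1 <= j <= n -> (Y j = p -> j = l1.-1) /\ (Y j = q -> j = g1.+1).
  move=> hj; case: (eqVneq j l1.-1) => [->|jl]; first by rewrite Yl; split => // /eqP; rewrite (negbTE pq).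
  case: (eqVneq j g1.+1) => [->|jg]; first by rewrite Yg; split => // /eqP; rewrite eq_sym (negbTE pq).
  have [r /inner [? ?] [E _ _ _ _]] := place_pivots_inside A1 p q hl hg hj jl jg.
  by rewrite /Y E.
move=> i j hi hj E.
have [pi qi] := at_pivot i hi; have [pj qj] := at_pivot j hj.
case: (eqVneq i l1.-1) => [il|il]; first by rewrite il pj // -E il.
case: (eqVneq i g1.+1) => [ig|ig]; first by rewrite ig qj // -E ig.
case: (eqVneq j l1.-1) => [jl|jl]; first by move: il; rewrite pi ?eqxx // E jl.
case: (eqVneq j g1.+1) => [jg|jg]; first by move: ig; rewrite qi ?eqxx // E jg.
have [ri hri [Ei Eri _ _ _]] := place_pivots_inside A1 p q hl hg hi il ig.
have [rj hrj [Ej Erj _ _ _]] := place_pivots_inside A1 p q hl hg hj jl jg.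
have /inj1 eq_r : A1 ri = A1 rj by rewrite -Ei -Ej.
have {}eq_r := eq_r ltac:(lia) ltac:(lia); rewrite Eri Erj in eq_r.
move: il ig jl jg => /eqP il /eqP ig /eqP jl /eqP jg.
clear -eq_r il ig jl jg hi hj hl hg.
by move: eq_r; case: (i =P 1); case: (i =P n); case: (j =P 1); case: (j =P n); lia.
Qed.

Lemma place_pivots_spec n A0 A1 p q l1 g1 : 2 <= n -> arr_inj n A0 ->
  p = minn (A0 1) (A0 n) -> q = maxn (A0 1) (A0 n) -> loop_post n A0 A1 p q l1 g1 ->
  let Y := place_pivots A1 l1.-1 g1.+1 n p q in
  [/\ Y l1.-1 = p, Y g1.+1 = q, arr_inj n Y, arr_bound n Y & partitioned n Y l1.-1 g1.+1].
Proof.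
move=> n2 inj0 Ep Eq [ol olg og o1 on oinj obnd oS oM oL] Y.
have pq : p < q.
  have : A0 1 != A0 n by apply/eqP => /inj0; lia.
  by rewrite Ep Eq; lia.
have [hl hg] : 2 <= l1 <= g1.+1 /\ g1 <= n.-1 by lia.
(* the pivots are the two end keys, which the scan does not touch *)
have Pv : p = A1 1 \/ p = A1 n by rewrite o1 on Ep; lia.
have Qv : q = A1 1 \/ q = A1 n by rewrite o1 on Eq; lia.
have inner x : 2 <= x <= n.-1 -> A1 x <> p /\ A1 x <> q.
  move=> hx; split=> E.
    by case: Pv => E'; rewrite E' in E; move/oinj: E; lia.
  by case: Qv => E'; rewrite E' in E; move/oinj: E; lia.
have Yl : Y l1.-1 = p by rewrite /Y place_pivotsE ?eqxx //; lia.
have Yg : Y g1.+1 = q by rewrite /Y place_pivotsE ?eqxx ?ifN_eq //; lia.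
have inside := place_pivots_inside A1 p q hl hg.
split => //.
- by apply: place_pivots_inj => //; rewrite neq_ltn pq.
- move=> j hj; case: (eqVneq j l1.-1) => [->|jl]; first by rewrite Yl; case: Pv => ->; apply: obnd; lia.
  case: (eqVneq j g1.+1) => [->|jg]; first by rewrite Yg; case: Qv => ->; apply: obnd; lia.
  have [r hr [Yj _ _ _ _]] := inside j hj jl jg.
  by rewrite /Y Yj; apply: obnd; lia.
- move=> j hj; rewrite Yl Yg.
  case: (eqVneq j l1.-1) => [->|jl]; first by split; lia.
  case: (eqVneq j g1.+1) => [->|jg]; first by split; lia.
  have [r hr [Yj _ c1 c2 c3]] := inside j hj jl jg; have [nr nq] := inner r hr.
  rewrite /Y Yj; split => h.
  + by apply: oS; have := c1 h; lia.
  + by have := oM r (c2 h); lia.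
  + by have := oL r (_ : g1 < r <= n.-1); lia.
Qed.

Lemma yaroslavskiy_blocks n (A Y : arr) l g : 2 <= n -> arr_inj n A -> arr_bound n A ->
  yaroslavskiy A 1 n = (Y, l, g) ->
  [/\ 1 <= l < g, g <= n, minn (A 1) (A n) = l.-1, maxn (A 1) (A n) = g.-1 &
      [/\ perm_eq (subarr Y 1 (l - 1)) (iota 0 (l - 1)),
          perm_eq (subarr Y l.+1 (g - l - 1)) (iota l (g - l - 1)) &
          perm_eq (subarr Y g.+1 (n - g)) (iota g (n - g))]].
Proof.
move=> n2 inj bnd; rewrite yaroslavskiyE.
set p := minn (A 1) (A n); set q := maxn (A 1) (A n).
have start : loop_inv n A A p q 2 n.-1 2 (n - 1).+1.
  by split => //; try lia; move=> j; lia.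
have pq : p <= q by rewrite /p /q; lia.
have := yloop_post pq start.
case: yloop => [[A1 l1] g1] post [<- <- <-].
have [Yl Yg injY bndY part] := place_pivots_spec n2 inj erefl erefl post.
have [lg gn] : 1 <= l1.-1 < g1.+1 /\ g1.+1 <= n by case: post; lia.
have pq' : p < q.
  have : A 1 != A n by apply/eqP => /inj; lia.
  by rewrite /p /q; lia.
have [Yl' Yg' B1 B2 B3] :=
  partitioned_blocks injY bndY lg gn ltac:(by rewrite Yl Yg) part.
by split; [| | rewrite -Yl' Yl | rewrite -Yg' Yg |].
Qed.

Definition relabeled n (sig : nat -> nat) (A B : arr) :=
  forall j, 1 <= j <= n -> B j = sig (A j).

Definition preserves_lt (sig : nat -> nat) t := forall x, (sig x < t) = (x < t).

Lemma preserves_lt_fix sig t : preserves_lt sig t -> preserves_lt sig t.+1 -> sig t = t.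
Proof. by move=> lt_t lt_t1; have := lt_t t; have := lt_t1 t; rewrite ltnn ltnS; lia. Qed.

Lemma preserves_le sig t : preserves_lt sig t -> forall x, (t <= sig x) = (t <= x).
Proof. by move=> pres x; rewrite leqNgt [RHS]leqNgt pres. Qed.

Lemma preserves_lt_between sig s t x : preserves_lt sig s -> preserves_lt sig t ->
  s <= x < t -> s <= sig x < t.
Proof. by move=> ps pt; rewrite (preserves_le ps) pt. Qed.

Lemma swap_relabeled n sig A B i j : relabeled n sig A B -> 1 <= i <= n -> 1 <= j <= n ->
  relabeled n sig (swap A i j) (swap B i j).
Proof.
move=> ag hi hj x hx; rewrite !swapE.
by case: eqP => _; [apply: ag | case: eqP => _; apply: ag].
Qed.

(* The algorithm only compares keys with the pivots, so a relabeling preserving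
   these comparisons is carried along the whole run: the inner loop, ... *)
Lemma dec_g_relabel n sig (A B : arr) q f k g : relabeled n sig A B ->
  preserves_lt sig q.+1 -> 1 <= k -> g <= n -> dec_g f B q k g = dec_g f A q k g.
Proof.
move=> ag hq k1 gn; elim: f g gn => [|f IH] g gn //=.
case: (ltnP k g) => kg; last by rewrite !andbF.
rewrite ag ?(preserves_le hq) ?kg; last lia.
by rewrite IH //; lia.
Qed.

Lemma yloop_relabel n sig p q : preserves_lt sig p -> preserves_lt sig q ->
  preserves_lt sig q.+1 ->
  forall f A B l g k, relabeled n sig A B -> 1 <= l <= k -> g <= n.-1 ->
  let: (A', l', g') := yloop f A p q l g k in
  let: (B', l'', g'') := yloop f B p q l g k in
  [/\ l'' = l', g'' = g' & relabeled n sig A' B'].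
Proof.
move=> hp hq hq1; elim=> [|f IH] A B l g k ag hl hg //=.
case: (leqP k g) => kg //.
have hk : 1 <= k <= n by lia.
rewrite ag // hp (preserves_le hq).
have /andP[d1 d2] := dec_g_range f.+1 A q kg.
have E : dec_g f.+1 B q k g = dec_g f.+1 A q k g by apply: (dec_g_relabel _ ag) => //; lia.
rewrite -/(dec_g f.+1 B q k g) -/(dec_g f.+1 A q k g) E.
set g' := dec_g f.+1 A q k g in d1 d2 E *.
rewrite ag ?(preserves_le hp); last lia.
case: ifP => _; first by apply: IH; [apply: swap_relabeled | ..] => //; lia.
case: ifP => _; last by apply: IH => //; lia.
case: ifP => _; first by apply: IH; [apply: swap_relabeled | ..] => //; lia.
by apply: IH; [apply: swap_relabeled; [apply: swap_relabeled|..] | ..] => //; lia.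
Qed.

Lemma place_pivots_relabel n sig A B l g p q : relabeled n sig A B -> sig p = p -> sig q = q ->
  1 <= l <= n -> 1 <= g <= n ->
  relabeled n sig (place_pivots A l g n p q) (place_pivots B l g n p q).
Proof.
move=> ag sp sq hl hg j hj; rewrite /place_pivots !updE.
by repeat (case: eqP => ?); rewrite ?sp ?sq //; apply: ag; lia.
Qed.

Lemma yaroslavskiy_relabel n sig (A B Y : arr) l g :
  2 <= n -> arr_inj n A -> arr_bound n A -> relabeled n sig A B ->
  (forall t, t \in [:: l.-1; l; g.-1; g] -> preserves_lt sig t) ->
  yaroslavskiy A 1 n = (Y, l, g) ->
  exists2 Y', yaroslavskiy B 1 n = (Y', l, g) & relabeled n sig Y Y'.
Proof.
move=> n2 inj bnd ag pres E.
have [lg gn Ep Eq _] := yaroslavskiy_blocks n2 inj bnd E.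
have [hp hp1 hq hq1] : [/\ preserves_lt sig l.-1, preserves_lt sig l,
    preserves_lt sig g.-1 & preserves_lt sig g] by split; apply: pres; rewrite !inE eqxx ?orbT.
have sp : sig l.-1 = l.-1 by apply: preserves_lt_fix; rewrite // prednK //; lia.
have sq : sig g.-1 = g.-1 by apply: preserves_lt_fix; rewrite // prednK //; lia.
have fixed j : j = 1 \/ j = n -> B j = A j.
  move=> hj; rewrite ag; last lia.
  have : A j = l.-1 \/ A j = g.-1 by move: Ep Eq; case: hj => ->; lia.
  by case=> ->.
move: E; rewrite !yaroslavskiyE !fixed ?Ep ?Eq; try by [left | right].
have hq1' : preserves_lt sig g.-1.+1 by rewrite prednK //; lia.
have := yloop_relabel hp hq hq1' (n - 1).+1 ag (erefl : 1 <= 2 <= 2) (leqnn n.-1).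
case: (yloop _ A _ _ _ _ _) => [[A1 l1] g1].
case: (yloop _ B _ _ _ _ _) => [[B1 l1'] g1'] [-> -> ag1] [<- El Eg].
exists (place_pivots B1 l1.-1 g1.+1 n l.-1 g.-1); first by rewrite El Eg.
by apply: place_pivots_relabel => //; lia.
Qed.

Definition nat_perm m (h : {perm 'I_m}) (x : nat) : nat :=
  if insub x is Some i then val (h i) else x.

Lemma nat_perm_ord m (h : {perm 'I_m}) (i : 'I_m) : nat_perm h i = h i.
Proof. by rewrite /nat_perm valK. Qed.

Lemma nat_perm_out m (h : {perm 'I_m}) x : m <= x -> nat_perm h x = x.
Proof. by move=> hx; rewrite /nat_perm insubF //; apply/negbTE; rewrite -leqNgt. Qed.

Lemma nat_perm_lt m (h : {perm 'I_m}) x : (nat_perm h x < m) = (x < m).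
Proof.
case: (ltnP x m) => hx; last by rewrite nat_perm_out // ltnNge hx.
by rewrite /nat_perm (insubT (fun x => x < m) hx) /= ltn_ord.
Qed.

Lemma nat_perm_mul m (h h' : {perm 'I_m}) x : nat_perm (h * h') x = nat_perm h' (nat_perm h x).
Proof.
case: (ltnP x m) => hx; last by rewrite !nat_perm_out.
by rewrite /nat_perm (insubT (fun x => x < m) hx) /= valK permM.
Qed.

Lemma nat_perm1 m x : nat_perm (1 : {perm 'I_m}) x = x.
Proof.
case: (ltnP x m) => hx; last by rewrite nat_perm_out.
by rewrite /nat_perm (insubT (fun x => x < m) hx) perm1.
Qed.

Definition block_perm m0 m (h : {perm 'I_m}) (x : nat) : nat :=
  if m0 <= x then nat_perm h (x - m0) + m0 else x.

Section BlockPerm.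
Variables (m0 m : nat).
Implicit Types h : {perm 'I_m}.

Lemma block_perm_out h x : x < m0 \/ m0 + m <= x -> block_perm m0 h x = x.
Proof.
rewrite /block_perm; case: (leqP m0 x) => // le_m0 [|le_x]; first lia.
by rewrite nat_perm_out ?subnK //; lia.
Qed.

Lemma block_perm_lt h t : t <= m0 \/ m0 + m <= t -> preserves_lt (block_perm m0 h) t.
Proof.
move=> ht x; rewrite /block_perm; case: (leqP m0 x) => // le_m0.
have := nat_perm_lt h (x - m0); case: (ltnP (x - m0) m) => [in_m|out_m]; last first.
  by rewrite nat_perm_out ?subnK.
by move=> lt_m; apply/idP/idP; lia.
Qed.

Lemma block_perm_mul h h' x :
  block_perm m0 (h * h') x = block_perm m0 h' (block_perm m0 h x).
Proof.
rewrite /block_perm; case: (leqP m0 x) => le_m0; last by rewrite leqNgt le_m0.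
by rewrite leq_addl addnK nat_perm_mul.
Qed.

Lemma block_perm1 x : block_perm m0 (1 : {perm 'I_m}) x = x.
Proof. by rewrite /block_perm nat_perm1; case: (leqP m0 x) => //; lia. Qed.

Lemma block_perm_inj h : injective (block_perm m0 h).
Proof. by move=> x y E; rewrite -[x]block_perm1 -[y]block_perm1 -(mulgV h) !block_perm_mul E. Qed.

End BlockPerm.

(* The group S_a x S_b x S_c of independent relabelings of the keys below,
   between and above the pivots a and a+b+1 (keys 0..a+b+c+1). *)
Definition blocks a b c := ({perm 'I_a} * {perm 'I_b} * {perm 'I_c})%type.

Definition relabel a b c (h : blocks a b c) (x : nat) : nat :=
  block_perm 0 h.1.1 (block_perm a.+1 h.1.2 (block_perm (a + b + 2) h.2 x)).

Section Relabel.
Variables a b c : nat.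
Implicit Types h : blocks a b c.

Lemma relabel_lt h t : t \in [:: a; a.+1; a + b + 1; a + b + 2; a + b + c + 2] ->
  preserves_lt (relabel h) t.
Proof.
rewrite !inE => ht x.
by rewrite /relabel !block_perm_lt //; lia.
Qed.

Lemma relabel_pivot h x : x = a \/ x = a + b + 1 -> relabel h x = x.
Proof.
by case=> ->; apply: preserves_lt_fix; apply: relabel_lt; rewrite !inE; lia.
Qed.

Lemma relabel_small h x : x < a -> relabel h x = block_perm 0 h.1.1 x.
Proof.
move=> hx; rewrite /relabel (@block_perm_out _ _ h.2 x); last by left; lia.
by rewrite (@block_perm_out _ _ h.1.2 x) //; left; lia.
Qed.

Lemma relabel_medium h x : a < x < a + b + 1 -> relabel h x = block_perm a.+1 h.1.2 x.
Proof.
move=> hx; rewrite /relabel (@block_perm_out _ _ _ x); last by left; lia.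
rewrite block_perm_out //; right; rewrite add0n leqNgt block_perm_lt; lia.
Qed.

Lemma relabel_large h x : a + b + 1 < x -> relabel h x = block_perm (a + b + 2) h.2 x.
Proof.
move=> hx; have hy : a + b + 2 <= block_perm (a + b + 2) h.2 x.
  by rewrite leqNgt block_perm_lt; [lia | left].
rewrite /relabel (@block_perm_out _ _ h.1.2) ?(@block_perm_out _ _ h.1.1) //; right; lia.
Qed.

Lemma relabel_mul h h' x : relabel (h * h')%g x = relabel h' (relabel h x).
Proof.
have pres t : t \in [:: a; a.+1; a + b + 1; a + b + 2; a + b + c + 2] ->
  preserves_lt (relabel h) t by apply: relabel_lt.
case: (ltngtP x a) => [xa|ax|->]; last by rewrite !relabel_pivot //; left.
  have ya : relabel h x < a by rewrite pres // inE eqxx.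
  by rewrite relabel_small // (relabel_small h') // relabel_small // block_perm_mul.
case: (ltngtP x (a + b + 1)) => [xq|qx|->]; last by rewrite !relabel_pivot //; right.
  have hx : a.+1 <= x < a + b + 1 by lia.
  have ya : a.+1 <= relabel h x < a + b + 1.
    by apply: preserves_lt_between hx; apply: pres; rewrite !inE eqxx ?orbT.
  by rewrite relabel_medium // (relabel_medium h') // relabel_medium // block_perm_mul.
have ya : a + b + 1 < relabel h x.
  have mem : a + b + 2 \in [:: a; a.+1; a + b + 1; a + b + 2; a + b + c + 2].
    by rewrite !inE eqxx ?orbT.
  have : a + b + 2 <= relabel h x by rewrite (preserves_le (pres _ mem)); lia.
  lia.
by rewrite relabel_large // (relabel_large h') // relabel_large // block_perm_mul.
Qed.

Lemma relabel1 x : relabel (1%g : blocks a b c) x = x.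
Proof. by rewrite /relabel !block_perm1. Qed.

Lemma relabelK h x : relabel h^-1%g (relabel h x) = x.
Proof. by rewrite -relabel_mul mulgV relabel1. Qed.

Lemma relabel_inj h : injective (relabel h).
Proof. by move=> x y E; rewrite -(relabelK h x) E relabelK. Qed.
End Relabel.

Section RelabelPerm.
Variables a b c : nat.
Local Notation n := (a + b + c + 2).
Implicit Types h : blocks a b c.

Lemma relabel_ord h (i : 'I_n) : relabel h i < n.
Proof. by rewrite relabel_lt ?ltn_ord // !inE eqxx ?orbT. Qed.

Definition relabel_fun h (i : 'I_n) : 'I_n := Ordinal (relabel_ord h i).

Lemma relabel_fun_inj h : injective (relabel_fun h).
Proof. by move=> i j /(congr1 val) /relabel_inj /val_inj. Qed.

Definition relabel_perm h : {perm 'I_n} := perm (@relabel_fun_inj h).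

Lemma relabel_permE h i : val (relabel_perm h i) = relabel h i.
Proof. by rewrite permE. Qed.

Lemma relabel_permM h h' : relabel_perm (h * h')%g = (relabel_perm h * relabel_perm h')%g.
Proof. by apply/permP => i; apply: val_inj; rewrite permM !relabel_permE relabel_mul. Qed.

Lemma relabel_perm1 : relabel_perm 1%g = 1%g.
Proof. by apply/permP => i; apply: val_inj; rewrite perm1 relabel_permE relabel1. Qed.
End RelabelPerm.

Lemma arr_of_perm_ord n (pi : {perm 'I_n}) (i : 'I_n) : arr_of_perm pi i.+1 = pi i.
Proof. by rewrite /arr_of_perm /= (nth_map i) ?size_enum_ord // nth_ord_enum. Qed.

Lemma arr_position n j : 1 <= j <= n -> exists i : 'I_n, j = i.+1.
Proof.
move=> hj; have hi : j.-1 < n by lia.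
by exists (Ordinal hi) => /=; lia.
Qed.

Lemma arr_of_perm_inj n (pi : {perm 'I_n}) : arr_inj n (arr_of_perm pi).
Proof.
move=> i j /arr_position [i' ->] /arr_position [j' ->].
by rewrite !arr_of_perm_ord => /val_inj/perm_inj ->.
Qed.

Lemma arr_of_perm_bound n (pi : {perm 'I_n}) : arr_bound n (arr_of_perm pi).
Proof. by move=> j /arr_position [i ->]; rewrite arr_of_perm_ord ltn_ord. Qed.

Lemma arr_of_perm_relabel a b c h (pi : {perm 'I_(a + b + c + 2)}) :
  relabeled (a + b + c + 2) (relabel h) (arr_of_perm pi) (arr_of_perm (pi * relabel_perm h)%g).
Proof. by move=> j /arr_position [i ->]; rewrite !arr_of_perm_ord permM relabel_permE. Qed.

Lemma count_lt_iota x m0 m : count (fun y => y < x) (iota m0 m) = minn (x - m0) m.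
Proof.
elim: m m0 => [|m IH] m0 /=; first by rewrite minn0.
by rewrite IH; case: (ltnP m0 x) => h /=; lia.
Qed.

Lemma relorder_iota w m0 m : perm_eq w (iota m0 m) -> relorder w = map (subn^~ m0) w.
Proof.
move=> P; apply/eq_in_map => x xw.
have : x \in iota m0 m by rewrite -(perm_mem P).
by rewrite mem_iota (seq.permP P) count_lt_iota; lia.
Qed.

Lemma perm_iota_of (s : seq nat) m0 m : uniq s -> size s = m ->
  {subset s <= [pred x | m0 <= x < m0 + m]} -> perm_eq s (iota m0 m).
Proof.
move=> u sz b; apply: uniq_perm; rewrite ?iota_uniq //.
have [_ E] := uniq_min_size u (s2 := iota m0 m)
  ltac:(by move=> x /b; rewrite mem_iota) ltac:(by rewrite size_iota sz).
by move=> x; rewrite E.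
Qed.

Lemma relorder_perm w m0 m : perm_eq w (iota m0 m) -> perm_eq (relorder w) (iota 0 m).
Proof.
move=> P; rewrite (relorder_iota P).
have bw x : x \in w -> m0 <= x < m0 + m by rewrite (perm_mem P) mem_iota.
apply: perm_iota_of.
- rewrite map_inj_in_uniq ?(perm_uniq P) ?iota_uniq // => x y /bw ? /bw ?; lia.
- by rewrite size_map (perm_size P) size_iota.
- by move=> _ /mapP [y /bw hy ->]; rewrite inE; lia.
Qed.

Lemma relorder_block_perm w m0 m (h : {perm 'I_m}) : perm_eq w (iota m0 m) ->
  relorder (map (block_perm m0 h) w) = map (nat_perm h) (relorder w).
Proof.
move=> P.
have bw x : x \in w -> m0 <= x < m0 + m by rewrite (perm_mem P) mem_iota.
have Ph : perm_eq (map (block_perm m0 h) w) (iota m0 m).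
  apply: perm_iota_of.
  - by rewrite map_inj_in_uniq ?(perm_uniq P) ?iota_uniq // => x y _ _; apply: block_perm_inj.
  - by rewrite size_map (perm_size P) size_iota.
  - move=> _ /mapP [y /bw hy ->]; rewrite inE.
    by apply: preserves_lt_between hy; apply: block_perm_lt; [left | right].
rewrite (relorder_iota Ph) (relorder_iota P) -!map_comp; apply/eq_in_map => x /bw hx /=.
by rewrite /block_perm (proj1 (andP hx)) addnK.
Qed.

Lemma relorder_map_block w m0 m (h : {perm 'I_m}) (sig : nat -> nat) :
  perm_eq w (iota m0 m) -> {in iota m0 m, sig =1 block_perm m0 h} ->
  relorder (map sig w) = map (nat_perm h) (relorder w).
Proof.
move=> P E; rewrite -(relorder_block_perm h P); congr relorder.
by apply/eq_in_map => x xw; apply: E; rewrite -(perm_mem P).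
Qed.

Lemma subarr_relabeled n sig (Y Y' : arr) s len : relabeled n sig Y Y' ->
  1 <= s -> s + len <= n.+1 -> subarr Y' s len = map sig (subarr Y s len).
Proof.
move=> ag h1 h2; rewrite /subarr -map_comp; apply/eq_in_map => x; rewrite mem_iota => hx.
by apply: ag; lia.
Qed.

Lemma ypart_bounds n (pi : {perm 'I_n}) ip iq : 2 <= n -> ypart pi = (ip, iq) ->
  1 <= ip < iq /\ iq <= n.
Proof.
rewrite /ypart; case E: yaroslavskiy => [[Y l] g] n2 [<- <-].
by have [] := yaroslavskiy_blocks n2 (@arr_of_perm_inj _ pi) (@arr_of_perm_bound _ pi) E.
Qed.

Definition shaped a b c (t : seq nat * seq nat * seq nat) :=
  [/\ perm_eq t.1.1 (iota 0 a), perm_eq t.1.2 (iota 0 b) & perm_eq t.2 (iota 0 c)].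

Lemma ypatterns_shaped n (pi : {perm 'I_n}) ip iq : 2 <= n -> ypart pi = (ip, iq) ->
  shaped (ip - 1) (iq - ip - 1) (n - iq) (ypatterns pi).
Proof.
rewrite /ypart /ypatterns /shaped; case E: yaroslavskiy => [[Y l] g] n2 [<- <-] /=.
have [_ _ _ _ [B1 B2 B3]] :=
  yaroslavskiy_blocks n2 (@arr_of_perm_inj _ pi) (@arr_of_perm_bound _ pi) E.
by split; apply: relorder_perm; [exact: B1 | exact: B2 | exact: B3].
Qed.

Definition relabel_patterns a b c (h : blocks a b c) (t : seq nat * seq nat * seq nat) :=
  (map (nat_perm h.1.1) t.1.1, map (nat_perm h.1.2) t.1.2, map (nat_perm h.2) t.2).

Lemma segment_sizes a b c :
  [/\ a.+1 - 1 = a, a + b + 2 - a.+1 - 1 = b & a + b + c + 2 - (a + b + 2) = c].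
Proof. by split; lia. Qed.

Lemma ypart_relabel a b c (h : blocks a b c) (pi : {perm 'I_(a + b + c + 2)}) :
  ypart pi = (a.+1, a + b + 2) ->
  ypart (pi * relabel_perm h)%g = (a.+1, a + b + 2) /\
  ypatterns (pi * relabel_perm h)%g = relabel_patterns h (ypatterns pi).
Proof.
rewrite /ypart /ypatterns; case E: yaroslavskiy => [[Y l] g] [El Eg].
have n2 : 2 <= a + b + c + 2 by lia.
have inj := @arr_of_perm_inj _ pi; have bnd := @arr_of_perm_bound _ pi.
have [_ _ _ _ [B1 B2 B3]] := yaroslavskiy_blocks n2 inj bnd E.
have pres t : t \in [:: l.-1; l; g.-1; g] -> preserves_lt (relabel h) t.
  by rewrite El Eg !inE => ht; apply: relabel_lt; rewrite !inE; lia.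
have [Y' E' ag] := yaroslavskiy_relabel n2 inj bnd (arr_of_perm_relabel h pi) pres E.
rewrite E' El Eg; split => //.
move: B1 B2 B3; rewrite El Eg; case: (segment_sizes a b c) => -> -> -> B1 B2 B3.
rewrite /relabel_patterns /= !(subarr_relabeled ag) //; try lia.
congr (_, _, _); apply: relorder_map_block; try eassumption; move=> x; rewrite mem_iota => hx.
- by rewrite relabel_small //; lia.
- by rewrite relabel_medium //; lia.
- by rewrite relabel_large //; lia.
Qed.

Lemma nat_perm_of_seq m (u : seq nat) : perm_eq u (iota 0 m) ->
  exists h : {perm 'I_m}, map (nat_perm h) (iota 0 m) = u.
Proof.
move=> P.
have sz : size u = m by rewrite (perm_size P) size_iota.
have bu i : i < m -> nth 0 u i < m.
  move=> hi; have : nth 0 u i \in u by rewrite mem_nth // sz.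
  by rewrite (perm_mem P) mem_iota.
pose f (i : 'I_m) : 'I_m := insubd i (nth 0 u i).
have fv i : val (f i) = nth 0 u i by rewrite val_insubd bu.
have f_inj : injective f.
  move=> i j /(congr1 val); rewrite !fv => /eqP.
  by rewrite nth_uniq ?sz ?(perm_uniq P) ?iota_uniq // => /eqP /val_inj.
exists (perm f_inj).
rewrite -[RHS](mkseq_nth 0 u) sz /mkseq; apply/eq_in_map => x; rewrite mem_iota => hx.
by rewrite -[x]/(val (Ordinal (hx : x < m))) nat_perm_ord permE fv.
Qed.

Lemma nat_perm_transitive m (s t : seq nat) : perm_eq s (iota 0 m) -> perm_eq t (iota 0 m) ->
  exists h : {perm 'I_m}, map (nat_perm h) s = t.
Proof.
move=> Ps Pt; have [hs Es] := nat_perm_of_seq Ps; have [ht Et] := nat_perm_of_seq Pt.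
exists (hs^-1 * ht)%g; rewrite -Es -Et -map_comp; apply/eq_map => x /=.
by rewrite nat_perm_mul -(nat_perm_mul hs) mulgV nat_perm1.
Qed.

Lemma nat_perm_free m (s : seq nat) (h h' : {perm 'I_m}) : perm_eq s (iota 0 m) ->
  map (nat_perm h) s = map (nat_perm h') s -> h = h'.
Proof.
move=> P /eq_in_map E; apply/permP => i; apply: val_inj => /=.
by rewrite -!nat_perm_ord; apply: E; rewrite (perm_mem P) mem_iota /=.
Qed.

Lemma relabel_patterns_transitive a b c t t' : shaped a b c t -> shaped a b c t' ->
  exists h : blocks a b c, relabel_patterns h t = t'.
Proof.
case: t t' => [[t1 t2] t3] [[t1' t2'] t3'] [/= P1 P2 P3] [/= P1' P2' P3'].
have [h1 <-] := nat_perm_transitive P1 P1'; have [h2 <-] := nat_perm_transitive P2 P2'.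
by have [h3 <-] := nat_perm_transitive P3 P3'; exists (h1, h2, h3).
Qed.

Lemma relabel_patterns_free a b c t (h h' : blocks a b c) : shaped a b c t ->
  relabel_patterns h t = relabel_patterns h' t -> h = h'.
Proof.
case: t h h' => [[t1 t2] t3] [[h1 h2] h3] [[h1' h2'] h3'] [/= P1 P2 P3] [/= E1 E2 E3].
by rewrite (nat_perm_free P1 E1) (nat_perm_free P2 E2) (nat_perm_free P3 E3).
Qed.

(* Orbit counting: (h, pi) |-> pi * relabel_perm h is a bijection from
   blocks a b c x {pi | output (a+1, a+b+2) with patterns s} onto
   {pi | output (a+1, a+b+2)}, since the patterns of the image are those of pi
   acted on by h. *)
Lemma card_fiber a b c s : shaped a b c s ->
  #|[set pi : {perm 'I_(a + b + c + 2)} |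
      (ypart pi == (a.+1, a + b + 2)) && (ypatterns pi == s)]| * (a`! * b`! * c`!) =
  #|[set pi : {perm 'I_(a + b + c + 2)} | ypart pi == (a.+1, a + b + 2)]|.
Proof.
move=> shaped_s.
set T := [set pi | _ && _]; set F := [set pi | _].
pose Phi (x : blocks a b c * {perm 'I_(a + b + c + 2)}) := (x.2 * relabel_perm x.1)%g.
have n2 : 2 <= a + b + c + 2 by lia.
have shaped_fiber (pi : {perm 'I_(a + b + c + 2)}) :
    ypart pi = (a.+1, a + b + 2) -> shaped a b c (ypatterns pi).
  by move=> Epi; have := ypatterns_shaped n2 Epi; case: (segment_sizes a b c) => -> -> ->.
have -> : F = Phi @: setX [set: blocks a b c] T.
  apply/setP => pi'; rewrite inE; apply/eqP/imsetP => [Epi'|[[h pi]]].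
    have [h Eh] := relabel_patterns_transitive (shaped_fiber _ Epi') shaped_s.
    have [Epi Ppi] := ypart_relabel h Epi'.
    exists (h^-1, pi' * relabel_perm h)%g; first by rewrite !inE Epi Ppi Eh !eqxx.
    by rewrite /Phi /= -mulgA -relabel_permM mulgV relabel_perm1 mulg1.
  by rewrite !inE /= => /andP[/eqP Epi _] ->; have [] := ypart_relabel h Epi.
rewrite card_in_imset ?cardsX ?cardsT ?card_prod ?card_Sn 1?mulnC //.
move=> [h pi] [h' pi']; rewrite !inE /= /Phi.
move=> /andP[/eqP Epi /eqP Ppi] /andP[/eqP Epi' /eqP Ppi'] E.
have [_ Q] := ypart_relabel h Epi; have [_ Q'] := ypart_relabel h' Epi'.
have eh : h = h' by apply: (relabel_patterns_free shaped_s); rewrite -{1}Ppi -Ppi' -Q -Q' E.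
by move: E; rewrite eh /= => /mulIg ->.
Qed.

Theorem lemma4p1 (n : nat) (hn : 2 <= n) (ip iq : nat)
    (s1 s2 s3 : seq nat)
    (h1 : perm_eq s1 (iota 0 (ip - 1)))
    (h2 : perm_eq s2 (iota 0 (iq - ip - 1)))
    (h3 : perm_eq s3 (iota 0 (n - iq))) :
  #|[set pi : {perm 'I_n} | (ypart pi == (ip, iq)) && (ypatterns pi == (s1, s2, s3))]|
    * ((ip - 1)`! * (iq - ip - 1)`! * (n - iq)`!)
  = #|[set pi : {perm 'I_n} | ypart pi == (ip, iq)]|.
Proof.
have [F0|[pi0]] := set_0Vmem [set pi : {perm 'I_n} | ypart pi == (ip, iq)].
  have : [set pi : {perm 'I_n} | (ypart pi == (ip, iq)) && (ypatterns pi == (s1, s2, s3))]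
    \subset [set pi | ypart pi == (ip, iq)] by apply/subsetP => pi; rewrite !inE => /andP[].
  by rewrite F0 subset0 => /eqP ->; rewrite !cards0.
rewrite inE => /eqP /(ypart_bounds hn) bounds.
have [a [b [c [Eip Eiq En]]]] : exists a b c, [/\ ip = a.+1, iq = a + b + 2 & n = a + b + c + 2].
  by exists (ip - 1), (iq - ip - 1), (n - iq); split; lia.
subst ip iq n; move: h1 h2 h3; case: (segment_sizes a b c) => -> -> ->.
by move=> h1 h2 h3; apply: card_fiber; split.
Qed.
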